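(* Fix $k\in\mathbb{N}$, positive constants $b_0,b_1,b_2,\lambda_0,\lambda_1$ and $\mu\in(0,1)$. There exists $C>0$ depending only on $b_0,b_1,\lambda_0,\lambda_1,\mu$ (and the fixed $k$) such that the following holds. Let $T\geq10$, $\ell<r$, $a^\pm\in\mathbb{R}^k$, $g:[\ell,r]\to\mathbb{R}$ Lipschitz with $g(\ell)=g(r)=0$, and $P\subset(\ell,\ell+T^{1/2})\cap(\ell,r)$ finite. Suppose that $r-\ell\leq b_0T$, $|P|\leq b_0T$, $|g(x)-g(y)|\leq b_1T|x-y|$ for all $x,y$, $a^\pm_j-a^\pm_{j+1}\geq\lambda_0T^{1/2}$ for $j\in\{1,\dots,k-1\}$, $a^-_k-g(\ell)\geq\lambda_1T$, $a^+_k-g(r)\geq\lambda_1T$, $a^-_1-g(\ell)\leq b_2T^2$, $a^+_1-g(r)\leq b_2T^2$. Then $\mathbb{P}_{\mathcal{L}}(\mathsf{H})\geq C^{-1}e^{-CT^{5/2}}$.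
   Context: $\mathbb{P}_{\mathrm{free}}$ is the law of $k$ independent Brownian bridges (diffusion parameter one) $\mathcal{L}=(\mathcal{L}_1,\dots,\mathcal{L}_k)$ on $[\ell,r]$ with $\mathcal{L}_j(\ell)=a^-_j$, $\mathcal{L}_j(r)=a^+_j$. $W(\mathcal{L})=1$ if $\mathcal{L}_j(p)>g(p)$ for all $p\in P$ and all $j$, and $0$ otherwise; $\mathbb{P}_{\mathcal{L}}$ is given by $d\mathbb{P}_{\mathcal{L}}/d\mathbb{P}_{\mathrm{free}}=W/\mathbb{E}_{\mathrm{free}}[W]$. $\mathsf{H}$ is the event that $\mathcal{L}_j(p)-\mathcal{L}_{j+1}(p)\geq\mu\lambda_0T^{1/2}$ for all $p\in P$, $j\in\{1,\dots,k-1\}$, and $\mathcal{L}_k(p)-g(p)\geq\mu\lambda_1T$ for all $p\in P$. *)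

From HB Require Import structures.
From mathcomp Require Import all_boot all_order all_algebra.
From mathcomp Require Import all_classical all_reals all_analysis.
Set Implicit Arguments. Unset Strict Implicit. Unset Printing Implicit Defensive.
Import Order.TTheory GRing.Theory Num.Theory.
Import numFieldNormedType.Exports.
Local Open Scope ring_scope.

Section Defs.
Variable R : realType.

Definition heat (t x y : R) : R :=
  expR (- (y - x) ^+ 2 / (2 * t)) / Num.sqrt (2 * pi * t).

(* Finite-dimensional density of a Brownian bridge (diffusion parameter one)
   on [l, r] from a to b, at the increasing times ts (inside (l, r)),
   evaluated at the values xs (size xs = size ts). *)
Definition bb_dens (l r a b : R) (ts xs : seq R) : R :=
  let tau := l :: rcons ts r in
  let xi := a :: rcons xs b in
  (\prod_(i < (size ts).+1)
      heat (nth 0 tau i.+1 - nth 0 tau i) (nth 0 xi i) (nth 0 xi i.+1))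
  / heat (r - l) a b.

Fixpoint iint (n : nat) (F : (nat -> R) -> \bar R) : \bar R :=
  match n with
  | 0 => F (fun _ => 0)
  | n'.+1 => (\int[@lebesgue_measure R]_x
                iint n' (fun v => F (fun i => if i == n' then x else v i)))%E
  end.

(* Value of curve L_j (1 <= j <= k) at the i-th point of P (m = |P|),
   encoded in the coordinate vector v. *)
Definition curve (m : nat) (v : nat -> R) (j i : nat) : R := v ((j.-1) * m + i)%N.

(* Joint density under P_free of (L_j(p))_{j in 1..k, p in P}. *)
Definition free_dens (k : nat) (l r : R) (am ap : nat -> R) (P : seq R)
  (v : nat -> R) : R :=
  \prod_(j < k) bb_dens l r (am j.+1) (ap j.+1) P
     [seq curve (size P) v j.+1 i | i <- iota 0 (size P)].

Definition Wev (k : nat) (g : R -> R) (P : seq R) (v : nat -> R) : bool :=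
  [forall j : 'I_k, forall i : 'I_(size P),
     g (nth 0 P i) < curve (size P) v j.+1 i].

Definition Hev (k : nat) (mu lam0 lam1 T : R) (g : R -> R) (P : seq R)
  (v : nat -> R) : bool :=
  [forall j : 'I_k, forall i : 'I_(size P),
     ((j.+1 < k)%N ==>
        (mu * lam0 * Num.sqrt T <=
           curve (size P) v j.+1 i - curve (size P) v j.+2 i))
     && ((j.+1 == k) ==>
        (mu * lam1 * T <= curve (size P) v j.+1 i - g (nth 0 P i)))].

Definition Efree (k : nat) (l r : R) (am ap : nat -> R) (P : seq R)
  (F : (nat -> R) -> bool) : \bar R :=
  iint (k * size P) (fun v => (free_dens k l r am ap P v * (F v)%:R)%:E).

Definition PL_H (k : nat) (mu lam0 lam1 T l r : R) (am ap : nat -> R)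
  (g : R -> R) (P : seq R) : R :=
  fine (Efree k l r am ap P (fun v => Wev k g P v && Hev k mu lam0 lam1 T g P v))
  / fine (Efree k l r am ap P (Wev k g P)).

End Defs.

From HB Require Import structures.
From mathcomp Require Import all_boot all_order all_algebra.
From mathcomp Require Import all_classical all_reals all_analysis.
From mathcomp Require Import normal_distribution measurable_realfun.
From mathcomp Require Import ring lra zify.
Import Order.TTheory GRing.Theory Num.Theory.
Local Open Scope ring_scope.

Set Implicit Arguments. Unset Strict Implicit.

(* Read backwards from the right endpoint, the values of a Brownian bridge at
   the points of P form a Gaussian Markov chain: given the value at the next
   point, the value at a point is Gaussian with an explicit mean and variance.
   Integrating the coordinates out one at a time gives E_free[W] <= 1.  For the
   numerator, ask every coordinate to lie in a window of width
   del * sqrt(variance), del = (1 - mu) lam0 / (b0 T), placed just above its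
   conditional mean shifted by a drift.  On this box each curve stays between
   the linear interpolation of its endpoints lifted by the parabola
   2 b1 T (t - l)(r - t)/(r - l), which dominates g, and that lift plus
   |P| del sqrt T <= (1 - mu) lam0 sqrt T; this gives W and H.  Each window has
   Gaussian mass at least (del / 3) exp(-(4 b1^2 T^2 var + del^2)), and since
   the variances along a curve add up to at most 2 sqrt T, the box has mass
   at least exp(-C T^(5/2)). *)

Section IteratedIntegral.
Context (R : realType).
Local Notation leb := (@lebesgue_measure R).

Definition upd (n : nat) (x : R) (v : nat -> R) : nat -> R :=
  fun i => if i == n then x else v i.

(* No measurability is needed: the integral of a nonnegative function is the
   supremum of the integrals of the simple functions below it. *)
Lemma le_integral_ge0 (f g : R -> \bar R) :
  (forall x, (0 <= f x)%E) -> (forall x, (f x <= g x)%E) ->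
  (\int[leb]_x f x <= \int[leb]_x g x)%E.
Proof.
move=> f0 fg; have g0 x : (0 <= g x)%E by apply: le_trans (f0 x) (fg x).
rewrite !ge0_integralTE//; apply: ereal_sup_le => _ [h hf <-].
by exists h => // x; apply: le_trans (hf x) (fg x).
Qed.

Lemma iint_ge0 N (F : (nat -> R) -> \bar R) :
  (forall v, (0 <= F v)%E) -> (0 <= iint N F)%E.
Proof.
elim: N F => [|N IH] F F0 /=; first exact: F0.
by apply: integral_ge0 => x _; apply: IH.
Qed.

Lemma iint_le N (F G : (nat -> R) -> \bar R) :
  (forall v, (0 <= F v)%E) -> (forall v, (F v <= G v)%E) ->
  (iint N F <= iint N G)%E.
Proof.
elim: N F G => [|N IH] F G F0 FG /=; first exact: FG.
by apply: le_integral_ge0 => x; [apply: iint_ge0 | apply: IH].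
Qed.

Lemma integral_cst_indic_itv (K a w : R) : 0 <= K -> 0 <= w ->
  (\int[leb]_x (K * \1_(`[a, a + w]%classic) x)%:E = (K * w)%:E)%E.
Proof.
move=> K0 w0; under eq_integral do rewrite EFinM.
rewrite ge0_integralZl_EFin//; last first.
  by apply/measurable_EFinP; apply: measurable_indic.
rewrite integral_indic//= setIT lebesgue_measure_itv/= lte_fin.
rewrite ltrDl; case: (ltrgtP 0 w) w0 => [_ _|//|<- _]; last by rewrite mulr0 mule0.
by rewrite -EFinD addrAC subrr add0r -EFinM.
Qed.

(* iint integrates v 0 innermost, so the side of the box in the coordinate n
   may depend on the coordinates i > n. *)
Lemma iint_box_ge N (F : (nat -> R) -> \bar R) (al : nat -> (nat -> R) -> R)
    (w : nat -> R) (c : R) :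
  (forall n, (n < N)%N -> 0 <= w n) -> 0 <= c ->
  (forall n v v', (n < N)%N -> (forall i, (n < i)%N -> v i = v' i) ->
     al n v = al n v') ->
  (forall v, (forall i, (N <= i)%N -> v i = 0) ->
     (forall n, (n < N)%N -> al n v <= v n <= al n v + w n) -> (c%:E <= F v)%E) ->
  (forall v, (0 <= F v)%E) ->
  ((c * \prod_(n < N) w n)%:E <= iint N F)%E.
Proof.
elim: N F al w c => [|N IH] F al w c w0 c0 alD Fbox F0.
  by rewrite big_ord0 mulr1; apply: Fbox => [i _|n]; rewrite ?ltn0.
have wN : 0 <= w N by apply: w0.
have Kp : 0 <= c * \prod_(n < N) w n.
  by rewrite mulr_ge0 // prodr_ge0 // => i _; apply: w0; rewrite ltnS ltnW.
set a := al N (fun _ => 0).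
rewrite big_ord_recr /= mulrA -(@integral_cst_indic_itv _ a (w N)) //.
apply: le_integral_ge0 => x; first by rewrite lee_fin mulr_ge0 // indic_ge0.
rewrite indicE; case: (boolP (x \in _)) => xin; last first.
  by rewrite mulr0; apply: iint_ge0.
rewrite mulr1; apply: (IH _ (fun n v => al n (upd N x v))) => //.
- by move=> n nN; apply/w0/ltnW.
- move=> n v v' nN vv'; apply: alD; first exact: ltnW.
  by move=> i ni; rewrite /upd; case: (i == N) => //; apply: vv'.
- move=> v vz vbox; apply: Fbox.
    by move=> i Ni; rewrite /upd (gtn_eqF Ni) vz // ltnW.
  move=> n; rewrite ltnS leq_eqVlt => /orP[/eqP ->|nN]; last first.
    by rewrite /upd (ltn_eqF nN); apply: vbox.
  have -> : al N (upd N x v) = a.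
    by apply: alD => // i Ni; rewrite /upd (gtn_eqF Ni) vz // ltnW.
  by move: xin; rewrite /upd eqxx inE /= in_itv.
Qed.

Lemma iint_kernel_le N (F : (nat -> R) -> \bar R) (psi : nat -> (nat -> R) -> R)
    (c : R) :
  0 <= c ->
  (forall n v v', (n < N)%N -> (forall i, (n <= i)%N -> v i = v' i) ->
     psi n v = psi n v') ->
  (forall n v, (n < N)%N -> 0 <= psi n v) ->
  (forall n v K, (n < N)%N -> 0 <= K ->
     (\int[leb]_x (K * psi n (upd n x v))%:E <= K%:E)%E) ->
  (forall v, (forall i, (N <= i)%N -> v i = 0) ->
     (F v <= (c * \prod_(n < N) psi n v)%:E)%E) ->
  (forall v, (0 <= F v)%E) ->
  (iint N F <= c%:E)%E.
Proof.
elim: N F psi c => [|N IH] F psi c c0 psiD psi0 psiI Fle F0.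
  by have := Fle (fun _ => 0) (fun i _ => erefl); rewrite big_ord0 mulr1.
apply: le_trans (psiI N (fun _ => 0) c (ltnSn N) c0).
apply: le_integral_ge0 => x; first exact: iint_ge0.
apply: (IH _ (fun n v => psi n (upd N x v))) => //.
- by rewrite mulr_ge0 // psi0.
- move=> n v v' nN vv'; apply: psiD; first exact: ltnW.
  by move=> i ni; rewrite /upd; case: (i == N) => //; apply: vv'.
- by move=> n v nN; apply/psi0/ltnW.
- move=> n v K nN K0.
  have -> : (fun y => (K * psi n (upd N x (upd n y v)))%:E) =
            (fun y => (K * psi n (upd n y (upd N x v)))%:E).
    apply: funext => y; congr ((K * psi n _)%:E); apply: funext => i.
    by rewrite /upd; case: (eqVneq i N) => // ->; rewrite (gtn_eqF nN).
  by apply: psiI => //; apply: ltnW.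
- move=> v vz; apply: le_trans (Fle _ _) _.
    by move=> i Ni; rewrite /upd (gtn_eqF Ni) vz // ltnW.
  rewrite big_ord_recr /= lee_fin mulrA mulrAC.
  rewrite (psiD N (upd N x v) (upd N x (fun _ => 0))) //.
  move=> i; rewrite leq_eqVlt => /orP[/eqP <-|Ni]; first by rewrite /upd eqxx.
  by rewrite /upd (gtn_eqF Ni) vz // ltnW.
Qed.

End IteratedIntegral.

Section HeatKernel.
Context (R : realType).
Local Notation leb := (@lebesgue_measure R).

Lemma heat_gt0 (t x y : R) : 0 < t -> 0 < heat t x y.
Proof. by move=> t0; rewrite divr_gt0 ?expR_gt0 // sqrtr_gt0 !mulr_gt0 ?pi_gt0. Qed.

Lemma heat_normal (t x y : R) : 0 < t -> heat t x y = normal_pdf x (Num.sqrt t) y.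
Proof.
move=> t0; have st : Num.sqrt t != 0 by rewrite gt_eqF // sqrtr_gt0.
rewrite normal_pdfE // /heat /normal_peak /normal_fun sqr_sqrtr ?ltW //.
by rewrite -[t *+ 2]mulr_natl -[t * pi *+ 2]mulr_natl [RHS]mulrC [t * pi]mulrC mulrA.
Qed.

Lemma integral_heat (t a K : R) : 0 < t -> 0 <= K ->
  (\int[leb]_x (K * heat t a x)%:E = K%:E)%E.
Proof.
move=> t0 K0; under eq_integral do rewrite EFinM heat_normal //.
rewrite integralZl //; last exact: integrable_normal_pdf.
by rewrite integral_normal_pdf mule1.
Qed.

(* Going from a to y through x in time s + u: the middle point is distributed
   as a Brownian bridge from (0, a) to (s + u, y) observed at time s. *)
Lemma heat_mul_bridge (s u a x y : R) : 0 < s -> 0 < u ->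
  heat s a x * heat u x y =
  heat (s + u) a y * heat (s * u / (s + u)) (a + s / (s + u) * (y - a)) x.
Proof.
move=> s0 u0; have su0 : 0 < s + u by rewrite addr_gt0.
rewrite /heat !mulf_div -!expRD -!sqrtrM ?mulr_ge0 ?ltW ?divr_gt0 ?mulr_gt0 ?pi_gt0 //.
congr (expR _ / Num.sqrt _); field; rewrite !gt_eqF //.
Qed.

Lemma heat_ge (s a x d e : R) : 0 < s -> 0 <= d -> d <= x - a <= d + e ->
  expR (- (d + e) ^+ 2 / (2 * s)) / Num.sqrt (2 * pi * s) <= heat s a x.
Proof.
move=> s0 d0 /andP[h1 h2].
rewrite /heat ler_pM2r ?invr_gt0 ?sqrtr_gt0 ?mulr_gt0 ?pi_gt0 //.
rewrite ler_expR !mulNr lerN2 ler_pM2r ?invr_gt0 ?mulr_gt0 //.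
by rewrite ler_sqr ?nnegrE; lra.
Qed.

End HeatKernel.

Section BridgeChain.
Context (R : realType).

Lemma prod_ord_mul (k m : nat) (F : nat -> R) :
  \prod_(n < k * m) F n = \prod_(j < k) \prod_(p < m) F (j * m + p)%N.
Proof.
elim: k => [|k IH]; first by rewrite mul0n !big_ord0.
by rewrite mulSnr big_split_ord /= IH big_ord_recr.
Qed.

Lemma prod_ord_mul_mod (k m : nat) (G : nat -> R) :
  \prod_(n < k * m) G (n %% m)%N = (\prod_(p < m) G p) ^+ k.
Proof.
rewrite (prod_ord_mul k m (fun n => G (n %% m)%N)) -[k in _ ^+ k]card_ord -prodr_const.
by apply: eq_bigr => j _; apply: eq_bigr => p _; rewrite modnMDl modn_small.
Qed.

Definition bridge_var (tau : nat -> R) i :=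
  (tau i - tau 0%N) * (tau i.+1 - tau i) / (tau i.+1 - tau 0%N).
Definition bridge_mean (tau xi : nat -> R) i :=
  xi 0%N + (tau i - tau 0%N) / (tau i.+1 - tau 0%N) * (xi i.+1 - xi 0%N).

Lemma incr_gt_first (tau : nat -> R) n :
  (forall i, (i <= n)%N -> tau i < tau i.+1) ->
  forall i, (i <= n)%N -> tau 0%N < tau i.+1.
Proof.
move=> h; elim=> [|i IH] iN; first exact: h.
exact: lt_trans (IH (ltnW iN)) (h _ iN).
Qed.

Lemma incr_lt_last (tau : nat -> R) n :
  (forall i, (i <= n)%N -> tau i < tau i.+1) ->
  forall i, (i <= n)%N -> tau i < tau n.+1.
Proof.
elim: n => [|n IH] h i; first by rewrite leqn0 => /eqP ->; apply: h.
rewrite leq_eqVlt => /orP[/eqP ->|iN]; first exact: h.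
apply: lt_trans (IH _ _ iN) (h _ _) => // j jn; exact/h/(leq_trans jn).
Qed.

(* Iterated Chapman-Kolmogorov: the density of the path is the density of its
   endpoint times the backward conditional densities of the bridge. *)
Lemma prod_heat_bridge (tau xi : nat -> R) n :
  (forall i, (i <= n)%N -> tau i < tau i.+1) ->
  \prod_(i < n.+1) heat (tau i.+1 - tau i) (xi i) (xi i.+1) =
  heat (tau n.+1 - tau 0%N) (xi 0%N) (xi n.+1) *
  \prod_(i < n) heat (bridge_var tau i.+1) (bridge_mean tau xi i.+1) (xi i.+1).
Proof.
elim: n => [|n IH] h; first by rewrite big_ord1 big_ord0 mulr1.
rewrite big_ord_recr /= IH; last by move=> i iN; apply: h; apply: (leq_trans iN).
have s0 : 0 < tau n.+1 - tau 0%N by rewrite subr_gt0 (incr_gt_first h).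
have u0 : 0 < tau n.+2 - tau n.+1 by rewrite subr_gt0 h.
rewrite big_ord_recr /= mulrAC heat_mul_bridge //.
have -> : tau n.+1 - tau 0%N + (tau n.+2 - tau n.+1) = tau n.+2 - tau 0%N by ring.
by rewrite -[LHS]mulrA; congr (_ * _); apply: mulrC.
Qed.

End BridgeChain.

Section FreeChain.
Context (R : realType) (l r : R) (P : seq R).
Local Notation m := (size P).

Definition knot (i : nat) : R := nth 0 (l :: rcons P r) i.

Lemma knot0 : knot 0 = l. Proof. by []. Qed.

Lemma knotS p : (p < m)%N -> knot p.+1 = nth 0 P p.
Proof. by move=> pm; rewrite /knot /= nth_rcons pm. Qed.

Lemma knot_last : knot m.+1 = r.
Proof. by rewrite /knot /= nth_rcons ltnn eqxx. Qed.

Lemma knot_incr : l < r -> sorted <%R P -> (forall p, p \in P -> l < p < r) ->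
  forall i, (i <= m)%N -> knot i < knot i.+1.
Proof.
move=> lr Ps Pin; have knot_in p : (p < m)%N -> l < knot p.+1 < r.
  by move=> pm; rewrite knotS // Pin // mem_nth.
case=> [|i] im.
  case: (posnP m) => [m0|m0]; first by rewrite /knot (size0nil m0).
  by case/andP: (knot_in 0%N m0).
rewrite knotS //; case: (ltnP i.+1 m) => h.
  by rewrite knotS //; apply: (sorted_ltn_nth lt_trans 0 Ps); rewrite ?inE.
have -> : i.+2 = m.+1 by lia.
by rewrite knot_last; case/andP: (knot_in i im); rewrite knotS.
Qed.

Hypothesis knot_lt : forall i, (i <= m)%N -> knot i < knot i.+1.

Lemma knot_gt_l p : (p <= m)%N -> l < knot p.+1.
Proof. by rewrite -knot0; apply: incr_gt_first. Qed.

(* The coordinate v n is the value of the curve n %/ m + 1 at the point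
   knot (n %% m).+1.  Under P_free, given the later coordinates, it is Gaussian
   with variance cond_var (n %% m) and mean curve_mean v n, computed from the
   left endpoint and from the value v n.+1 at the next point, or from the right
   endpoint after the last point of P. *)
Definition cond_var (p : nat) : R := bridge_var knot p.+1.

Definition cond_mean (a b : R) (v : nat -> R) (n p : nat) : R :=
  a + (knot p.+1 - l) / (knot p.+2 - l) *
      ((if (p.+1 < m)%N then v n.+1 else b) - a).

Definition curve_mean (am ap : nat -> R) (v : nat -> R) (n : nat) : R :=
  cond_mean (am (n %/ m).+1) (ap (n %/ m).+1) v n (n %% m).

Definition chain_kernel (am ap : nat -> R) (n : nat) (v : nat -> R) : R :=
  heat (cond_var (n %% m)) (curve_mean am ap v n) (v n).

Lemma cond_var_bounds p : (p < m)%N ->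
  [/\ 0 < cond_var p, cond_var p <= knot p.+1 - l &
      ((p.+1 < m)%N -> cond_var p <= knot p.+2 - knot p.+1)].
Proof.
move=> pm; have a0 : 0 < knot p.+1 - l by rewrite subr_gt0 knot_gt_l // ltnW.
have b0 : 0 < knot p.+2 - knot p.+1 by rewrite subr_gt0 knot_lt.
rewrite /cond_var /bridge_var knot0.
have -> : knot p.+2 - l = (knot p.+1 - l) + (knot p.+2 - knot p.+1) by ring.
set a := knot p.+1 - l in a0 *; set b := knot p.+2 - knot p.+1 in b0 *.
have ab : 0 < a + b by rewrite addr_gt0.
by split; rewrite ?divr_gt0 ?mulr_gt0 // ler_pdivrMr //; nra.
Qed.

Lemma cond_var_gt0 p : (p < m)%N -> 0 < cond_var p.
Proof. by case/cond_var_bounds. Qed.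

Lemma sum_cond_var_le : \sum_(p < m) cond_var p <= 2 * (knot m - l).
Proof.
case Em: m => [|n]; first by rewrite big_ord0 knot0 subrr mulr0.
have nm : (n < m)%N by rewrite Em.
have [_ last_le _] := cond_var_bounds nm.
rewrite big_ord_recr /= mulr2n mulrDl mul1r lerD //.
apply: (@le_trans _ _ (\sum_(p < n) (knot p.+2 - knot p.+1))).
  apply: ler_sum => p _; have pm : (p < m)%N by rewrite Em ltnS ltnW.
  by case: (cond_var_bounds pm) => _ _; apply; rewrite Em ltnS.
rewrite -(big_mkord xpredT (fun p => knot p.+2 - knot p.+1)).
rewrite (telescope_sumr (fun i => knot i.+1)) // lerD2l lerN2.
by apply/ltW/knot_gt_l.
Qed.

Lemma bb_dens_chain (a b : R) (xs : seq R) : size xs = m ->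
  bb_dens l r a b P xs =
  \prod_(p < m) heat (cond_var p)
     (bridge_mean knot (nth 0 (a :: rcons xs b)) p.+1) (nth 0 (a :: rcons xs b) p.+1).
Proof.
move=> sx; rewrite /bb_dens (prod_heat_bridge _ knot_lt) knot_last knot0.
rewrite /= nth_rcons sx ltnn eqxx mulrC mulKf //.
by rewrite gt_eqF // heat_gt0 // subr_gt0 -{1}knot0 -knot_last (incr_gt_first knot_lt).
Qed.

Lemma free_dens_chain (k : nat) (am ap v : nat -> R) :
  free_dens k l r am ap P v = \prod_(n < k * m) chain_kernel am ap n v.
Proof.
rewrite /free_dens (prod_ord_mul k m (chain_kernel am ap ^~ v)).
apply: eq_bigr => j _; rewrite bb_dens_chain ?size_map ?size_iota //.
apply: eq_bigr => p _; have pm := ltn_ord p.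
have nth_curves q : (q < m)%N ->
    nth 0 [seq curve m v j.+1 i | i <- iota 0 m] q = v (j * m + q)%N.
  by move=> qm; rewrite (nth_map 0%N) ?size_iota // nth_iota.
rewrite /chain_kernel /curve_mean divnMDl ?divn_small ?addn0 ?modnMDl ?modn_small //;
  last exact: leq_ltn_trans pm.
rewrite /bridge_mean /cond_mean knot0 /= !nth_rcons size_map size_iota pm.
rewrite (nth_curves p pm).
case: ifP => [pm1|/negbT]; first by rewrite nth_curves // addnS.
by rewrite -leqNgt => mp; have -> : p.+1 == m by apply/eqP; lia.
Qed.

Lemma curve_mean_next am ap v v' n : v n.+1 = v' n.+1 ->
  curve_mean am ap v n = curve_mean am ap v' n.
Proof. by move=> e; rewrite /curve_mean /cond_mean e. Qed.

Lemma mod_lt_size (k n : nat) : (n < k * m)%N -> (n %% m < m)%N.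
Proof. by case: (posnP m) => [->|m0]; rewrite ?muln0 // ltn_pmod. Qed.

Lemma chain_kernel_ge0 k am ap n v : (n < k * m)%N -> 0 <= chain_kernel am ap n v.
Proof. by move=> nk; rewrite ltW // heat_gt0 // cond_var_gt0 // (mod_lt_size nk). Qed.

Lemma free_dens_ge0 k am ap v : 0 <= free_dens k l r am ap P v.
Proof. by rewrite free_dens_chain prodr_ge0 // => n _; apply: chain_kernel_ge0. Qed.

Lemma Efree_le k am ap (F G : (nat -> R) -> bool) :
  (forall v, F v -> G v) -> (Efree k l r am ap P F <= Efree k l r am ap P G)%E.
Proof.
move=> FG; apply: iint_le => v; rewrite lee_fin ?mulr_ge0 ?free_dens_ge0 //.
by apply: ler_wpM2l; rewrite ?free_dens_ge0 // ler_nat; case: (F v) (FG v) => // ->.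
Qed.

Lemma Efree_le1 k am ap (F : (nat -> R) -> bool) : (Efree k l r am ap P F <= 1)%E.
Proof.
apply: (@iint_kernel_le _ _ _ (chain_kernel am ap)) => //.
- move=> n v v' _ vv'; rewrite /chain_kernel (vv' n) // (@curve_mean_next _ _ v v') //.
  exact: vv'.
- by move=> n v; apply: chain_kernel_ge0.
- move=> n v K nk K0; under eq_integral => x do
    rewrite /chain_kernel /upd eqxx (@curve_mean_next _ _ _ v) ?(gtn_eqF (ltnSn n)) //.
  by rewrite integral_heat // cond_var_gt0 // (mod_lt_size nk).
- move=> v _; rewrite mul1r -free_dens_chain lee_fin ler_piMr ?free_dens_ge0 //.
  by case: (F v).
- by move=> v; rewrite lee_fin mulr_ge0 ?free_dens_ge0.
Qed.

Definition kernel_floor (D W : nat -> R) (p : nat) : R :=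
  expR (- (D p + W p) ^+ 2 / (2 * cond_var p)) / Num.sqrt (2 * pi * cond_var p).

Lemma kernel_floor_ge0 D W p : 0 <= kernel_floor D W p.
Proof. by rewrite divr_ge0 ?expR_ge0 ?sqrtr_ge0. Qed.

Lemma Efree_box_ge (k : nat) (am ap D W : nat -> R) (F : (nat -> R) -> bool) :
  (forall p, (p < m)%N -> 0 <= D p) -> (forall p, (p < m)%N -> 0 <= W p) ->
  (forall v, (forall n, (n < k * m)%N ->
      curve_mean am ap v n + D (n %% m)%N <= v n
        <= curve_mean am ap v n + D (n %% m)%N + W (n %% m)%N) -> F v) ->
  (((\prod_(p < m) (kernel_floor D W p * W p)) ^+ k)%:E
    <= Efree k l r am ap P F)%E.
Proof.
move=> D0 W0 Fbox.
rewrite -(prod_ord_mul_mod k m (fun p => kernel_floor D W p * W p)) big_split /=.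
apply: (@iint_box_ge _ _ _ (fun n v => curve_mean am ap v n + D (n %% m)%N)
  (fun n => W (n %% m)%N)) => //.
- by move=> n nk; rewrite W0 // (mod_lt_size nk).
- by rewrite prodr_ge0 // => n _; apply: kernel_floor_ge0.
- by move=> n v v' _ vv'; rewrite (@curve_mean_next _ _ v v') // vv'.
- move=> v _ vbox; rewrite Fbox // mulr1 free_dens_chain lee_fin.
  apply: ler_prod => n _; have nk := ltn_ord n; have pm := mod_lt_size nk.
  rewrite kernel_floor_ge0 /kernel_floor heat_ge ?cond_var_gt0 ?D0 //.
  by have := vbox n nk; lra.
- by move=> v; rewrite lee_fin mulr_ge0 ?free_dens_ge0.
Qed.

End FreeChain.

Section Interpolation.
Context (R : realType).

Lemma backward_chain_bounds (m : nat) (x f th u : nat -> R) (B : R) :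
  (forall p, (p < m)%N -> 0 <= th p <= 1) ->
  (forall p, (p < m)%N -> 0 <= u p <= B) ->
  (forall p, (p < m)%N -> x p - f p =
      u p + th p * ((if (p.+1 < m)%N then x p.+1 else f m) - f p.+1)) ->
  forall p, (p < m)%N -> 0 <= x p - f p <= m%:R * B.
Proof.
move=> th01 u0B xf.
suff chain d p : (p + d.+1)%N = m -> 0 <= x p - f p <= d.+1%:R * B.
  move=> p pm; have /andP[-> le_dB] := chain (m - p.+1)%N p ltac:(lia).
  have B0 : 0 <= B by case/andP: (u0B p pm) => /le_trans; apply.
  by apply: le_trans le_dB _; rewrite ler_wpM2r // ler_nat; lia.
elim: d p => [|d IH] p pd; have pm : (p < m)%N by lia.
  rewrite xf //; have -> : p.+1 = m by lia.
  by rewrite ltnn subrr mulr0 addr0 mul1r u0B.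
have pm1 : (p.+1 < m)%N by lia.
rewrite xf // pm1.
have /andP[E0 E1] := IH p.+1 ltac:(lia).
have /andP[t0 t1] := th01 p pm; have /andP[u0 u1] := u0B p pm.
rewrite addr_ge0 ?mulr_ge0 //= -[d.+2]addn1 natrD mulrDl mul1r addrC lerD //.
exact: le_trans (ler_piMl E0 t1) E1.
Qed.

Definition raised_interp (l r L a b t : R) :=
  a + (b - a) * (t - l) / (r - l) + 2 * L * (t - l) * (r - t) / (r - l).

Lemma interp_weight_bounds (l r t : R) : l < r -> l <= t <= r ->
  0 <= (t - l) / (r - l) <= 1.
Proof.
move=> lr /andP[lt tr]; have rl : 0 < r - l by rewrite subr_gt0.
apply/andP; split; first by apply: divr_ge0; lra.
by rewrite ler_pdivrMr // mul1r lerD2r.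
Qed.

Lemma raised_interp_r l r L a b : l < r -> raised_interp l r L a b r = b.
Proof. by move=> lr; rewrite /raised_interp; field; rewrite gt_eqF // subr_gt0. Qed.

Lemma raised_interp_sub l r L a b a' b' t : l < r ->
  raised_interp l r L a b t - raised_interp l r L a' b' t =
  (a - a') * (1 - (t - l) / (r - l)) + (b - b') * ((t - l) / (r - l)).
Proof. by move=> lr; rewrite /raised_interp; field; rewrite gt_eqF // subr_gt0. Qed.

Lemma ge_convex_comb (c x y rho : R) : 0 <= rho <= 1 -> c <= x -> c <= y ->
  c <= x * (1 - rho) + y * rho.
Proof. by move=> /andP[r0 r1] cx cy; nra. Qed.

Lemma raised_interp_E l r L a b t : l < r ->
  raised_interp l r L a b t = a * (1 - (t - l) / (r - l)) + b * ((t - l) / (r - l))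
     + 2 * L * (t - l) * (r - t) / (r - l).
Proof. by move=> lr; rewrite /raised_interp; field; rewrite gt_eqF // subr_gt0. Qed.

Lemma raised_interp_step l r L a b t1 t2 : l < t2 -> l < r ->
  raised_interp l r L a b t1 =
  a + (t1 - l) / (t2 - l) * (raised_interp l r L a b t2 - a)
    + 2 * L * (t1 - l) * (t2 - t1) / (r - l).
Proof. by move=> lt2 lr; rewrite /raised_interp; field; rewrite !gt_eqF // subr_gt0. Qed.

Lemma lipschitz_le_parabola (g : R -> R) (L l r t : R) : l < r -> l <= t <= r ->
  g l = 0 -> g r = 0 ->
  (forall x y, l <= x <= r -> l <= y <= r -> `|g x - g y| <= L * `|x - y|) ->
  g t <= 2 * L * (t - l) * (r - t) / (r - l).
Proof.
move=> lr /andP[lt tr] gl gr glip; have rl : 0 < r - l by rewrite subr_gt0.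
have lrl : l <= l <= r by rewrite lexx ltW.
have lrr : l <= r <= r by rewrite lexx ltW.
have ltr : l <= t <= r by rewrite lt tr.
have := glip t l ltr lrl; have := glip t r ltr lrr.
rewrite gl gr !subr0 distrC (ger0_norm (x := t - l)) ?(ger0_norm (x := r - t));
  rewrite ?subr_ge0 // => gr_le gl_le.
have gt_le : g t <= `|g t| := ler_norm (g t).
rewrite ler_pdivlMr //; case: (lerP (t - l) (r - t)) => h.
  apply: le_trans (ler_wpM2r (ltW rl) (le_trans gt_le gl_le)) _.
  have : 0 <= L * (t - l) by apply: le_trans gl_le.
  nra.
apply: le_trans (ler_wpM2r (ltW rl) (le_trans gt_le gr_le)) _.
have : 0 <= L * (r - t) by apply: le_trans gr_le.
nra.
Qed.

End Interpolation.

Section Estimates.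
Context (R : realType).

Lemma sqrt2pi_le3 : Num.sqrt (2 * pi) <= 3 :> R.
Proof.
have pi4 : (pi : R) < 4 by have := @pihalf_lt2 R; rewrite ltr_pdivrMr //; lra.
rewrite -(@ger0_norm _ 3) // -sqrtr_sqr ler_wsqrtr //.
by have := @pi_gt0 R; lra.
Qed.

(* The right-hand side bounds the mass that N(0, s) gives to a window of width
   del * sqrt s starting at 2 L s rho. *)
Lemma gauss_window_ge (s del L rho : R) : 0 < s -> 0 < del -> 0 <= rho <= 1 ->
  0 <= L ->
  del / 3 * expR (- (4 * L ^+ 2 * s + del ^+ 2)) <=
  expR (- (2 * L * s * rho + del * Num.sqrt s) ^+ 2 / (2 * s))
    / Num.sqrt (2 * pi * s) * (del * Num.sqrt s).
Proof.
move=> s0 del0 /andP[r0 r1] L0.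
have q0 : 0 < Num.sqrt s by rewrite sqrtr_gt0.
have sp0 : 0 < Num.sqrt (2 * pi) :> R by rewrite sqrtr_gt0 mulr_gt0 ?pi_gt0.
rewrite sqrtrM; last by rewrite mulr_ge0 // ltW // pi_gt0.
set E := expR (- (2 * L * s * rho + _) ^+ 2 / _).
have -> : E / (Num.sqrt (2 * pi) * Num.sqrt s) * (del * Num.sqrt s)
    = del / Num.sqrt (2 * pi) * E by field; rewrite !gt_eqF.
rewrite /E; apply: ler_pM; rewrite ?expR_ge0 //.
- by apply: divr_ge0; lra.
- by rewrite ler_pM2l // lef_pV2 ?posrE // sqrt2pi_le3.
rewrite ler_expR !mulNr lerN2 ler_pdivrMr ?mulr_gt0 //.
have sq : s = Num.sqrt s ^+ 2 by rewrite sqr_sqrtr // ltW.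
set q := Num.sqrt s in q0 sq *; rewrite sq.
have sum_sq : (2 * L * q ^+ 2 * rho + del * q) ^+ 2 <=
    2 * (2 * L * q ^+ 2 * rho) ^+ 2 + 2 * (del * q) ^+ 2.
  by have := sqr_ge0 (2 * L * q ^+ 2 * rho - del * q); nra.
have : (2 * L * q ^+ 2 * rho) ^+ 2 <= (2 * L * q ^+ 2) ^+ 2.
  by rewrite [X in X <= _]exprMn; apply: ler_piMr; rewrite ?sqr_ge0 ?expr_le1.
have -> : (4 * L ^+ 2 * q ^+ 2 + del ^+ 2) * (2 * q ^+ 2) =
  2 * (2 * L * q ^+ 2) ^+ 2 + 2 * (del * q) ^+ 2 by ring.
lra.
Qed.

Lemma expR_Ninv_le (q : R) : 0 < q -> expR (- q^-1) <= q.
Proof.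
move=> q0; rewrite expRN -[X in _ <= X]invrK lef_pV2 ?posrE ?expR_gt0 ?invr_gt0 //.
by apply: le_trans (expR_ge1Dx _); rewrite lerDr.
Qed.

Lemma expR_le_exprn (q M : R) (m : nat) : 0 < q -> m%:R <= M ->
  expR (- (M / q)) <= q ^+ m.
Proof.
move=> q0 mM; apply: (@le_trans _ _ (expR (- q^-1) ^+ m)); last first.
  by apply: lerXn2r; rewrite ?nnegrE ?expR_ge0 ?expR_Ninv_le // ltW.
by rewrite -expRM_natr ler_expR mulNr lerN2 mulrC ler_pM2r ?invr_gt0.
Qed.

Lemma expR_exprn_ge (A X : R) (k : nat) : 0 <= A -> 0 <= X ->
  (1 + k%:R * A)^-1 * expR (- (1 + k%:R * A) * X) <= expR (- (A * X)) ^+ k.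
Proof.
move=> A0 X0; have kA0 : 0 <= k%:R * A by rewrite mulr_ge0.
rewrite -expRM_natr -[X in _ <= X]mul1r; apply: ler_pM.
- by rewrite invr_ge0; lra.
- exact: expR_ge0.
- by rewrite invf_le1; lra.
- by rewrite ler_expR !mulNr lerN2 mulrAC ler_wpM2r //; lra.
Qed.

Lemma le_ratio_fine (c : R) (N D : \bar R) : 0 < c ->
  (c%:E <= N)%E -> (N <= D)%E -> (D <= 1)%E -> c <= fine N / fine D.
Proof.
case: N => [x||] //; case: D => [y||] //= c0; rewrite !lee_fin => cx xy y1.
rewrite ler_pdivlMr; last lra.
by apply: le_trans cx; rewrite ler_piMr; lra.
Qed.

End Estimates.

Section BoxCurves.
Context (R : realType) (l r : R) (P : seq R).
Local Notation m := (size P).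
Local Notation knot := (knot l r P).
Local Notation cond_var := (cond_var l r P).
Hypothesis lr : l < r.
Hypothesis knot_lt : forall i, (i <= m)%N -> knot i < knot i.+1.

Lemma knot_in p : (p <= m)%N -> l < knot p.+1 <= r.
Proof.
move=> pm; rewrite knot_gt_l //=; case: (ltnP p m) => [pm'|mp].
  by have := incr_lt_last knot_lt pm'; rewrite knot_last => /ltW.
by rewrite (@anti_leq p m) ?pm // knot_last.
Qed.

(* By raised_interp_step, the lifted interpolant exceeds its own backward
   conditional mean by drift L p at knot p.+1. *)
Definition drift (L : R) (p : nat) : R :=
  2 * L * (knot p.+1 - l) * (knot p.+2 - knot p.+1) / (r - l).

Lemma drift_ge0 L p : 0 <= L -> (p < m)%N -> 0 <= drift L p.
Proof.
move=> L0 pm; have /andP[lp _] := knot_in (ltnW pm).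
have /andP[_ pr] := knot_in pm.
by rewrite divr_ge0 ?mulr_ge0 ?subr_ge0 ?(ltW (knot_lt _)) ?(ltW lp) ?(ltW lr).
Qed.

Lemma box_curve_bounds (k : nat) (am ap W : nat -> R) (L B : R) (v : nat -> R) :
  0 <= L -> (forall p, (p < m)%N -> 0 <= W p <= B) ->
  (forall n, (n < k * m)%N ->
      curve_mean l r P am ap v n + drift L (n %% m)%N <= v n
        <= curve_mean l r P am ap v n + drift L (n %% m)%N + W (n %% m)%N) ->
  forall j p, (j < k)%N -> (p < m)%N ->
  0 <= v (j * m + p)%N - raised_interp l r L (am j.+1) (ap j.+1) (knot p.+1)
    <= m%:R * B.
Proof.
move=> L0 WB vbox j p jk; move: p.
pose f q := raised_interp l r L (am j.+1) (ap j.+1) (knot q.+1).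
apply: (@backward_chain_bounds _ m (fun q => v (j * m + q)%N) f
  (fun q => (knot q.+1 - l) / (knot q.+2 - l))
  (fun q => v (j * m + q)%N - (curve_mean l r P am ap v (j * m + q) + drift L q)))
  => q qm.
- have /andP[lq _] := knot_in (ltnW qm); have /andP[lq2 _] := knot_in qm.
  by apply: interp_weight_bounds; rewrite ?ltW ?knot_lt.
- have nk : (j * m + q < k * m)%N by nia.
  have := vbox _ nk; rewrite modnMDl modn_small //.
  by case/andP: (WB q qm) => _; lra.
- have /andP[lq2 _] := knot_in qm.
  rewrite /f (raised_interp_step _ _ _ _ lq2 lr) /curve_mean /cond_mean.
  rewrite divnMDl ?divn_small ?addn0 ?modnMDl ?modn_small //;
    last exact: leq_ltn_trans qm.
  rewrite addnS (_ : raised_interp l r L _ _ (knot m.+1) = ap j.+1);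
    last by rewrite knot_last raised_interp_r.
  by rewrite /drift; case: ifP => _; ring.
Qed.

Lemma curves_separated (k : nat) (am ap : nat -> R) (g : R -> R)
    (mu lam0 lam1 T L : R) (v : nat -> R) :
  0 < mu < 1 -> 0 < lam0 * Num.sqrt T -> 0 < lam1 * T ->
  g l = 0 -> g r = 0 ->
  (forall x y, l <= x <= r -> l <= y <= r -> `|g x - g y| <= L * `|x - y|) ->
  (forall j, (1 <= j < k)%N ->
     lam0 * Num.sqrt T <= am j - am j.+1 /\ lam0 * Num.sqrt T <= ap j - ap j.+1) ->
  lam1 * T <= am k - g l -> lam1 * T <= ap k - g r ->
  (forall j p, (j < k)%N -> (p < m)%N ->
     0 <= v (j * m + p)%N - raised_interp l r L (am j.+1) (ap j.+1) (knot p.+1)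
       <= (1 - mu) * (lam0 * Num.sqrt T)) ->
  Wev k g P v && Hev k mu lam0 lam1 T g P v.
Proof.
move=> /andP[mu0 mu1] gap0 floor0 gl gr glip gaps amk apk curves.
have weight p : (p < m)%N -> 0 <= (knot p.+1 - l) / (r - l) <= 1.
  move=> pm; apply: interp_weight_bounds => //.
  by case/andP: (knot_in (ltnW pm)) => /ltW ->.
have gap j p : (j.+1 < k)%N -> (p < m)%N ->
    mu * lam0 * Num.sqrt T <= v (j * m + p)%N - v (j.+1 * m + p)%N.
  move=> jk pm; have /andP[hj _] := curves j p (ltnW jk) pm.
  have /andP[_ hj1] := curves j.+1 p jk pm.
  have [ga gb] := gaps j.+1 jk.
  have := raised_interp_sub L (am j.+1) (ap j.+1) (am j.+2) (ap j.+2) (knot p.+1) lr.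
  have := ge_convex_comb (weight p pm) ga gb; lra.
have bottom j p : j.+1 = k -> (p < m)%N ->
    mu * lam1 * T <= v (j * m + p)%N - g (nth 0 P p).
  move=> jk pm; have /andP[hj _] := curves j p (ltac:(by rewrite jk)) pm.
  have /andP[lp pr] := knot_in (ltnW pm).
  have lpr : l <= knot p.+1 <= r by rewrite (ltW lp).
  have := lipschitz_le_parabola lr lpr gl gr glip.
  rewrite -(knotS l r) //; rewrite raised_interp_E // jk in hj.
  rewrite gl gr !subr0 in amk apk.
  have := ge_convex_comb (weight p pm) amk apk.
  have : mu * lam1 * T <= lam1 * T by rewrite -mulrA ler_piMl ?ltW.
  lra.
have above j p : (j < k)%N -> (p < m)%N -> g (nth 0 P p) < v (j * m + p)%N.
  move=> jk pm; move Ed: (k - j.+1)%N => d; elim: d j jk Ed => [|d IH] j jk Ed.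
    have := bottom j p ltac:(lia) pm; have : 0 < mu * lam1 * T by rewrite -mulrA mulr_gt0.
    lra.
  have := gap j p ltac:(lia) pm; have := IH j.+1 ltac:(lia) ltac:(lia).
  have : 0 < mu * lam0 * Num.sqrt T by rewrite -mulrA mulr_gt0.
  lra.
apply/andP; split; apply/forallP => j; apply/forallP => i.
  exact: above (ltn_ord j) (ltn_ord i).
apply/andP; split; apply/implyP => jk; first exact: gap jk (ltn_ord i).
exact: bottom (eqP jk) (ltn_ord i).
Qed.

Lemma drift_E L p : (p < m)%N ->
  drift L p = 2 * L * cond_var p * ((knot p.+2 - l) / (r - l)).
Proof.
move=> pm; have /andP[lp2 _] := knot_in pm.
by rewrite /drift /cond_var /bridge_var knot0; field; rewrite !gt_eqF ?subr_gt0.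
Qed.

Lemma box_weight_ge (L del : R) : 0 <= L -> 0 < del ->
  (del / 3) ^+ m * expR (- (4 * L ^+ 2 * \sum_(p < m) cond_var p + del ^+ 2 *+ m))
  <= \prod_(p < m) (kernel_floor l r P (drift L)
                      (fun p => del * Num.sqrt (cond_var p)) p
                    * (del * Num.sqrt (cond_var p))).
Proof.
move=> L0 del0.
have -> : (del / 3) ^+ m * expR (- (4 * L ^+ 2 * \sum_(p < m) cond_var p + del ^+ 2 *+ m))
    = \prod_(p < m) (del / 3 * expR (- (4 * L ^+ 2 * cond_var p + del ^+ 2))).
  rewrite big_split /= prodr_const card_ord -expR_sum sumrN big_split /=.
  by rewrite -mulr_sumr sumr_const card_ord.
apply: ler_prod => p _; have pm := ltn_ord p.
rewrite mulr_ge0 ?expR_ge0 ?divr_ge0 ?(ltW del0) //=.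
have /andP[lp2 p2r] := knot_in pm.
rewrite /kernel_floor drift_E // gauss_window_ge ?cond_var_gt0 //.
by apply: interp_weight_bounds; rewrite // ltW.
Qed.

End BoxCurves.

Section Constants.
Context (R : realType).

Definition rate (b0 b1 lam0 mu : R) : R :=
  8 * b1 ^+ 2 + lam0 ^+ 2 / b0 + 3 * b0 ^+ 2 / ((1 - mu) * lam0).

Lemma rate_ge0 b0 b1 lam0 mu : 0 < b0 -> 0 < lam0 -> mu < 1 -> 0 <= rate b0 b1 lam0 mu.
Proof.
move=> /ltW b0_ge0 /ltW lam0_ge0 mu1; have mu' : 0 <= 1 - mu by rewrite subr_ge0 ltW.
apply: addr_ge0; first apply: addr_ge0.
- by rewrite mulr_ge0 ?sqr_ge0.
- by rewrite divr_ge0 ?sqr_ge0.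
- by rewrite divr_ge0 ?mulr_ge0 ?sqr_ge0.
Qed.

Definition window (b0 lam0 mu T : R) : R := (1 - mu) * lam0 / (b0 * T).

(* In rate, 8 b1^2 pays for the parabolic lift, lam0^2 / b0 for the Gaussian
   cost of the window widths and the last term for the smallness of the at
   most b0 T windows of a curve. *)
Lemma weight_exponent_ge (b0 b1 lam0 mu T S : R) (m : nat) :
  0 < b0 -> 0 < lam0 -> 0 < mu < 1 -> 1 <= T -> 0 <= S <= 2 * Num.sqrt T ->
  m%:R <= b0 * T ->
  expR (- (rate b0 b1 lam0 mu * (T ^+ 2 * Num.sqrt T))) <=
  (window b0 lam0 mu T / 3) ^+ m
    * expR (- (4 * (b1 * T) ^+ 2 * S + window b0 lam0 mu T ^+ 2 *+ m)).
Proof.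
move=> b0_gt0 lam0_gt0 /andP[mu0 mu1] T1 /andP[S0 S_le] mb.
set del := window b0 lam0 mu T.
have T0 : 0 < T by lra.
have mu' : 0 < 1 - mu by rewrite subr_gt0.
have del0 : 0 < del by rewrite divr_gt0 ?mulr_gt0.
have sT1 : 1 <= Num.sqrt T by rewrite -sqrtr1 ler_wsqrtr.
have T2 : 1 <= T ^+ 2 by rewrite expr_ge1 // ltW.
have X_ge : T ^+ 2 <= T ^+ 2 * Num.sqrt T by rewrite ler_peMr // sqr_ge0.
have count : expR (- (3 * b0 ^+ 2 / ((1 - mu) * lam0) * T ^+ 2)) <= (del / 3) ^+ m.
  have -> : 3 * b0 ^+ 2 / ((1 - mu) * lam0) * T ^+ 2 = b0 * T / (del / 3).
    by rewrite /del /window; field; rewrite !gt_eqF ?mulr_gt0.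
  by apply: expR_le_exprn mb; apply: divr_gt0 => //; lra.
have lift : 4 * (b1 * T) ^+ 2 * S <= 8 * b1 ^+ 2 * (T ^+ 2 * Num.sqrt T).
  have -> : 8 * b1 ^+ 2 * (T ^+ 2 * Num.sqrt T) = 4 * (b1 * T) ^+ 2 * (2 * Num.sqrt T).
    by ring.
  by apply: ler_wpM2l => //; apply: mulr_ge0; [lra | exact: sqr_ge0].
have widths : del ^+ 2 *+ m <= lam0 ^+ 2 / b0.
  rewrite -mulr_natr; apply: le_trans (ler_wpM2l (sqr_ge0 _) mb) _.
  have -> : del ^+ 2 * (b0 * T) = (1 - mu) ^+ 2 / T * (lam0 ^+ 2 / b0).
    by rewrite /del /window; field; rewrite !gt_eqF.
  apply: ler_piMl; first by rewrite divr_ge0 ?sqr_ge0 ?ltW.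
  rewrite ler_pdivrMr // mul1r; apply: le_trans T1.
  by rewrite expr_le1 //; lra.
have widths' : lam0 ^+ 2 / b0 <= lam0 ^+ 2 / b0 * (T ^+ 2 * Num.sqrt T).
  by apply: ler_peMr; [rewrite divr_ge0 ?sqr_ge0 ?ltW | lra].
have count' : 3 * b0 ^+ 2 / ((1 - mu) * lam0) * T ^+ 2 <=
    3 * b0 ^+ 2 / ((1 - mu) * lam0) * (T ^+ 2 * Num.sqrt T).
  by rewrite ler_wpM2l // divr_ge0 ?mulr_ge0 ?sqr_ge0 // ltW // mulr_gt0.
apply: le_trans (ler_pM (expR_ge0 _) (expR_ge0 _) count (lexx _)).
rewrite -expRD ler_expR /rate; lra.
Qed.

End Constants.

Section LowerBound.
Context (R : realType) (k : nat) (b0 b1 lam0 lam1 mu T l r : R) (am ap : nat -> R)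
  (g : R -> R) (P : seq R).
Hypotheses (b0_gt0 : 0 < b0) (b1_gt0 : 0 < b1) (lam0_gt0 : 0 < lam0)
  (lam1_gt0 : 0 < lam1) (mu01 : 0 < mu < 1) (T_ge1 : 1 <= T) (lr : l < r).
Hypothesis P_sorted : sorted <%R P.
Hypothesis P_in : forall p, p \in P -> (l < p < l + Num.sqrt T) /\ p < r.
Hypotheses (gl : g l = 0) (gr : g r = 0).
Hypothesis g_lip : forall x y, l <= x <= r -> l <= y <= r ->
  `|g x - g y| <= b1 * T * `|x - y|.
Hypothesis size_P : (size P)%:R <= b0 * T.
Hypothesis gaps : forall j, (1 <= j < k)%N ->
  lam0 * Num.sqrt T <= am j - am j.+1 /\ lam0 * Num.sqrt T <= ap j - ap j.+1.
Hypotheses (am_k : lam1 * T <= am k - g l) (ap_k : lam1 * T <= ap k - g r).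

Local Notation m := (size P).
Local Notation del := (window b0 lam0 mu T).
Local Notation W := (fun p => del * Num.sqrt (cond_var l r P p)).

Lemma knot_lt_P i : (i <= m)%N -> knot l r P i < knot l r P i.+1.
Proof.
by apply: knot_incr => // p /P_in[/andP[lp _] pr]; rewrite lp.
Qed.

Lemma T_gt0 : 0 < T. Proof. exact: lt_le_trans ltr01 T_ge1. Qed.

Lemma del_gt0 : 0 < del.
Proof. by case/andP: mu01 => _ mu1; rewrite divr_gt0 ?mulr_gt0 ?subr_gt0 ?T_gt0. Qed.

Lemma last_knot_le : knot l r P m - l <= Num.sqrt T.
Proof.
case Em: m => [|n]; first by rewrite knot0 subrr sqrtr_ge0.
have nm : (n < m)%N by rewrite Em.
have [/andP[_ pT] _] := P_in (mem_nth 0 nm).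
by rewrite (knotS l r nm); lra.
Qed.

Lemma sqrt_ge1 : 1 <= Num.sqrt T.
Proof. by rewrite -sqrtr1 ler_wsqrtr. Qed.

Lemma cond_var_le p : (p < m)%N -> cond_var l r P p <= T.
Proof.
move=> pm; have [_ sig_le _] := cond_var_bounds knot_lt_P pm.
have [/andP[_ pT] _] := P_in (mem_nth 0 pm).
have : Num.sqrt T <= T.
  by rewrite -{2}(sqr_sqrtr (ltW T_gt0)) expr2 ler_peMr ?sqrt_ge1 ?sqrtr_ge0.
by rewrite (knotS l r pm) in sig_le; lra.
Qed.

Lemma box_separated v :
  (forall n, (n < k * m)%N ->
     curve_mean l r P am ap v n + drift l r P (b1 * T) (n %% m)%N <= v n
       <= curve_mean l r P am ap v n + drift l r P (b1 * T) (n %% m)%N + W (n %% m)%N) ->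
  Wev k g P v && Hev k mu lam0 lam1 T g P v.
Proof.
move=> vbox; have sT_ge1 := sqrt_ge1.
have L0 : 0 <= b1 * T by rewrite ltW // mulr_gt0 ?T_gt0.
have sT_gt0 : 0 < Num.sqrt T by lra.
apply: curves_separated g_lip gaps am_k ap_k _ => //.
- exact: knot_lt_P.
- by rewrite mulr_gt0.
- by rewrite mulr_gt0 ?T_gt0.
have W_le p : (p < m)%N -> 0 <= W p <= del * Num.sqrt T.
  move=> pm; have del0 := ltW del_gt0.
  by rewrite mulr_ge0 ?sqrtr_ge0 //= ler_wpM2l // ler_wsqrtr // cond_var_le.
move=> j p jk pm.
have /andP[-> le_mB] := box_curve_bounds lr knot_lt_P L0 W_le vbox jk pm.
have e : b0 * T * del = (1 - mu) * lam0.
  by rewrite /window mulrC divfK // gt_eqF // mulr_gt0 ?T_gt0.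
have count : m%:R * del <= (1 - mu) * lam0.
  by rewrite -e ler_wpM2r // ltW // del_gt0.
have := ler_wpM2r (sqrtr_ge0 T) count; lra.
Qed.

Lemma numerator_ge :
  (((expR (- (rate b0 b1 lam0 mu * (T ^+ 2 * Num.sqrt T)))) ^+ k)%:E
    <= Efree k l r am ap P (fun v => Wev k g P v && Hev k mu lam0 lam1 T g P v))%E.
Proof.
have L0 : 0 <= b1 * T by rewrite ltW // mulr_gt0 ?T_gt0.
have del0 := ltW del_gt0.
apply: le_trans; last apply: (Efree_box_ge knot_lt_P _ _ box_separated).
- rewrite lee_fin; apply: lerXn2r; rewrite ?nnegrE ?expR_ge0 //.
    apply: prodr_ge0 => p _.
    by rewrite mulr_ge0 ?kernel_floor_ge0 // mulr_ge0 ?sqrtr_ge0.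
  apply: le_trans (box_weight_ge lr knot_lt_P L0 del_gt0).
  have [_ mu1] := andP mu01.
  apply: weight_exponent_ge => //; rewrite ?sumr_ge0 //=.
    by apply: le_trans (sum_cond_var_le knot_lt_P) _; have := last_knot_le; lra.
  by move=> p _; exact/ltW/(cond_var_gt0 knot_lt_P (ltn_ord p)).
- by move=> p pm; apply: (drift_ge0 lr knot_lt_P L0 pm).
- by move=> p _; rewrite mulr_ge0 ?sqrtr_ge0.
Qed.

End LowerBound.

Theorem mainTheorem5 (R : realType) (k : nat) (b0 b1 lam0 lam1 mu : R) :
  0 < b0 -> 0 < b1 -> 0 < lam0 -> 0 < lam1 -> 0 < mu < 1 ->
  exists C : R, 0 < C /\
  forall (b2 T l r : R) (am ap : nat -> R) (g : R -> R) (P : seq R),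
    0 < b2 -> 10 <= T -> l < r ->
    sorted <%R P ->
    (forall p, p \in P -> (l < p < l + Num.sqrt T) /\ p < r) ->
    g l = 0 -> g r = 0 ->
    (forall x y, l <= x <= r -> l <= y <= r ->
       `|g x - g y| <= b1 * T * `|x - y|) ->
    r - l <= b0 * T ->
    (size P)%:R <= b0 * T ->
    (forall j, (1 <= j < k)%N ->
       lam0 * Num.sqrt T <= am j - am j.+1 /\
       lam0 * Num.sqrt T <= ap j - ap j.+1) ->
    lam1 * T <= am k - g l ->
    lam1 * T <= ap k - g r ->
    am 1%N - g l <= b2 * T ^+ 2 ->
    ap 1%N - g r <= b2 * T ^+ 2 ->
    C^-1 * expR (- C * (T ^+ 2 * Num.sqrt T))
      <= PL_H k mu lam0 lam1 T l r am ap g P.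
Proof.
move=> b0_gt0 b1_gt0 lam0_gt0 lam1_gt0 mu01.
have rate0 : 0 <= rate b0 b1 lam0 mu by rewrite rate_ge0 // (andP mu01).2.
have kA0 : 0 <= k%:R * rate b0 b1 lam0 mu by rewrite mulr_ge0.
exists (1 + k%:R * rate b0 b1 lam0 mu); split; first lra.
move=> b2 T l r am ap g P _ T10 lr Ps Pin gl gr g_lip _ size_P gaps am_k ap_k _ _.
have T1 : 1 <= T by lra.
have knot_lt := knot_lt_P lr Ps Pin.
rewrite /PL_H; apply: le_ratio_fine.
- by rewrite mulr_gt0 ?expR_gt0 // invr_gt0; lra.
- apply: le_trans; last apply: (numerator_ge b0_gt0 b1_gt0 lam0_gt0 lam1_gt0 mu01 T1 lr
    Ps Pin gl gr g_lip size_P gaps am_k ap_k).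
  by rewrite lee_fin expR_exprn_ge // mulr_ge0 ?sqrtr_ge0 ?sqr_ge0.
- by apply: (Efree_le knot_lt) => v /andP[].
- exact: (Efree_le1 knot_lt).
Qed.
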